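(* Let $E$ be the elliptic curve over $\mathbb{Q}$ given by $y^2 = x^3+x^2+x+1$, and let $\rho_{E,4}\colon \mathrm{Gal}(\overline{\mathbb{Q}}/\mathbb{Q}) \to \mathrm{GL}_2(\mathbb{Z}/4\mathbb{Z})$ be the representation on its $4$-torsion $E[4]$. Then $\rho_{E,4} \cong \rho$, where $\rho$ is defined as follows: let $K := \mathbb{Q}(i,\sqrt2,\sqrt{1+i})$, a Galois extension of $\mathbb{Q}$, identify $\mathrm{Gal}(K/\mathbb{Q})$ with $D_4 = \langle r,s \mid r^4=s^2=1,\ srs=r^{-1}\rangle$ via the automorphisms $r,s$ determined by $s(i)=i$, $s(\sqrt2)=-\sqrt2$, $s(\sqrt{1+i})=\sqrt{1+i}$, $r(i)=-i$, $r(\sqrt2)=-\sqrt2$, $r(\sqrt{1+i}) = \frac{1-i}{\sqrt2}\sqrt{1+i}$, and let $\rho$ be the composite of the natural surjection $\mathrm{Gal}(\overline{\mathbb{Q}}/\mathbb{Q}) \twoheadrightarrow \mathrm{Gal}(K/\mathbb{Q}) \cong D_4$ with the embedding $D_4 \hookrightarrow \mathrm{GL}_2(\mathbb{Z}/4\mathbb{Z})$ given by $r \mapsto \begin{pmatrix}1&2\\1&1\end{pmatrix}$, $s \mapsto \begin{pmatrix}-1&2\\2&-1\end{pmatrix}$. *)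

From HB Require Import structures.
From mathcomp Require Import all_boot all_algebra all_field.
Set Implicit Arguments. Unset Strict Implicit. Unset Printing Implicit Defensive.
Import GRing.Theory Num.Theory.
Local Open Scope ring_scope.

(* Points of E : y^2 = x^3 + x^2 + x + 1 over Qbar = algC;
   None is the point at infinity O. *)
Definition ec_pt := option (algC * algC).

Definition on_E (P : ec_pt) : bool :=
  match P with
  | None => true
  | Some (x, y) => y ^+ 2 == x ^+ 3 + x ^+ 2 + x + 1
  end.

(* Chord-tangent group law for y^2 = x^3 + a2 x^2 + a4 x + a6 with
   a2 = a4 = a6 = 1. *)
Definition ec_add (P Q : ec_pt) : ec_pt :=
  match P, Q with
  | None, _ => Q
  | _, None => P
  | Some (x1, y1), Some (x2, y2) =>
      if (x1 == x2) && (y1 == - y2) then None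
      else
        let l := if x1 == x2 then (3 * x1 ^+ 2 + 2 * x1 + 1) / (2 * y1)
                 else (y2 - y1) / (x2 - x1) in
        let x3 := l ^+ 2 - 1 - x1 - x2 in
        Some (x3, - (l * (x3 - x1) + y1))
  end.

Definition ec_mul (n : nat) (P : ec_pt) : ec_pt := iter n (ec_add P) None.

Definition ec_map (f : algC -> algC) (P : ec_pt) : ec_pt :=
  omap (fun p => (f p.1, f p.2)) P.

Definition E4 (P : ec_pt) : bool := on_E P && (ec_mul 4 P == None).

Definition E4_basis (P Q : ec_pt) : Prop :=
  E4 P /\ E4 Q /\
  forall T, E4 T ->
    exists! ac : 'I_4 * 'I_4,
      T = ec_add (ec_mul ac.1 P) (ec_mul ac.2 Q).

Definition sqrt2 : algC := sqrtC 2.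
Definition sqrt1i : algC := sqrtC (1 + 'i).

(* lifts to Aut(Qbar) of r and s in Gal(K/Q) *)
Definition is_r (f : algC -> algC) : Prop :=
  f 'i = - 'i /\ f sqrt2 = - sqrt2 /\ f sqrt1i = (1 - 'i) / sqrt2 * sqrt1i.
Definition is_s (f : algC -> algC) : Prop :=
  f 'i = 'i /\ f sqrt2 = - sqrt2 /\ f sqrt1i = sqrt1i.

(* two automorphisms agree on K (= agree on its generators) *)
Definition agree_on_K (f g : algC -> algC) : Prop :=
  f 'i = g 'i /\ f sqrt2 = g sqrt2 /\ f sqrt1i = g sqrt1i.

Definition Mr : 'M['Z_4]_2 :=
  \matrix_(i < 2, j < 2)
    (if i == 0 :> nat then (if j == 0 :> nat then 1 else 2%:R)
     else 1).
Definition Ms : 'M['Z_4]_2 :=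
  \matrix_(i < 2, j < 2) (if i == j then -1 else 2%:R).

(* sigma acts on the basis (P, Q) by the matrix M (columns = images):
   sigma(P) = M00 P + M10 Q, sigma(Q) = M01 P + M11 Q *)
Definition acts_by (f : algC -> algC) (P Q : ec_pt) (M : 'M['Z_4]_2) : Prop :=
  ec_map f P = ec_add (ec_mul (M 0 0) P) (ec_mul (M 1 0) Q) /\
  ec_map f Q = ec_add (ec_mul (M 0 1) P) (ec_mul (M 1 1) Q).

(* Every point of E[4] has coordinates in K = Q(i, sqrt 2, sqrt (1 + i)): a
   point of order dividing 4 has y = 0 or, by the duplication formula, an
   abscissa that is a root of psi4, and both x^3 + x^2 + x + 1 and psi4 split
   into linear factors over K.  Elements of K are computed exactly, as rational
   coordinates in the tower Q(i)(sqrt 2)(sqrt (1 + i)) whose evaluation into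
   algC is a ring morphism, and every equality test of the chord-tangent law
   is certified by an explicit inverse.  The sixteen points a P + b Q are then
   computed, seen to be distinct and to exhaust E[4]; and since an
   automorphism acts on K-rational points through the images of the three
   generators of K, the action of r^a s^b on P and Q is checked in the eight
   cases a < 4, b < 2. *)

From HB Require Import structures.
From mathcomp Require Import all_boot all_algebra all_field.
From mathcomp Require Import ring.
Import GRing.Theory Num.Theory.
Set Implicit Arguments.
Unset Strict Implicit.
Local Open Scope ring_scope.

Lemma iter_modn (T : Type) (h : T -> T) k n z :
  iter k h z = z -> iter n h z = iter (n %% k) h z.
Proof.
move=> hk; rewrite {1}(divn_eq n k) addnC iterD; congr (iter _ h _).
by elim: (n %/ k)%N => //= q IHq; rewrite mulSn iterD IHq.
Qed.

Lemma mul_mx2E (R : pzRingType) (A B : 'M[R]_2) i j :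
  (A * B) i j = A i 0 * B 0 j + A i 1 * B 1 j.
Proof.
rewrite [A * B]/(A *m B) mxE !big_ord_recl big_ord0 addr0.
by have -> : (lift ord0 ord0 : 'I_2) = 1 by apply/val_inj.
Qed.

Record presentation := Presentation {
  code : eqType;
  ratc : rat -> code;
  addc : code -> code -> code;
  oppc : code -> code;
  mulc : code -> code -> code;
  invc : code -> code;
  eval : code -> algC;
  eval_rat q : eval (ratc q) = ratr q;
  evalD x y : eval (addc x y) = eval x + eval y;
  evalN x : eval (oppc x) = - eval x;
  evalM x y : eval (mulc x y) = eval x * eval y }.

Arguments ratc {p}.
Arguments eval {p}.

Section PresentationTheory.
Variable F : presentation.
Implicit Types x y z : code F.

Definition subc x y := addc x (oppc y).
Definition natc n : code F := ratc n%:R.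
Definition unitc z := mulc z (invc z) == ratc 1.
(* [eval] need not be injective: distinct codes are shown to have distinct
   values by exhibiting an inverse of their difference. *)
Definition certified_eq x y := (x == y) || unitc (subc x y).

Lemma evalB x y : eval (subc x y) = eval x - eval y.
Proof. by rewrite evalD evalN. Qed.

Lemma eval_natc n : eval (natc n) = n%:R.
Proof. by rewrite eval_rat rmorph_nat. Qed.

Lemma eval_unitc z : unitc z -> eval z * eval (invc z) = 1.
Proof. by move/eqP/(congr1 eval); rewrite evalM eval_rat rmorph1. Qed.

Lemma eval_unitc_neq0 z : unitc z -> eval z != 0.
Proof.
move/eval_unitc=> zV; apply: contra_eq_neq zV => ->.
by rewrite mul0r eq_sym oner_neq0.
Qed.

Lemma eval_invc z : unitc z -> eval (invc z) = (eval z)^-1.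
Proof. by move/eval_unitc/mulr1_eq. Qed.

Lemma eval_eqE x y : certified_eq x y -> (eval x == eval y) = (x == y).
Proof.
case: (eqVneq x y) => [-> | nxy]; first by rewrite eqxx.
by rewrite /certified_eq (negbTE nxy) => /eval_unitc_neq0; rewrite evalB subr_eq0 => /negbTE.
Qed.

Lemma eval_iter (f : algC -> algC) (h : code F -> code F) :
  (forall z, f (eval z) = eval (h z)) -> forall n z, iter n f (eval z) = eval (iter n h z).
Proof. by move=> fh; elim=> //= n IHn z; rewrite IHn fh. Qed.

Fixpoint mulXsub_add r c (cs : seq (code F)) : seq (code F) :=
  if cs is c' :: cs' then subc c (mulc r c') :: mulXsub_add r c' cs' else [:: c].

Definition roots_poly (rs : seq (code F)) : seq (code F) :=
  foldr (fun r => mulXsub_add r (ratc 0)) [:: ratc 1] rs.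

Lemma horner_mulXsub_add r c cs (t : algC) :
  (Poly (map eval (mulXsub_add r c cs))).[t] =
  eval c + (t - eval r) * (Poly (map eval cs)).[t].
Proof.
rewrite !horner_Poly; elim: cs c => [|c' cs IHcs] c /=; first by rewrite mul0r !add0r mulr0 addr0.
by rewrite IHcs evalB evalM; ring.
Qed.

Lemma horner_roots_poly rs (t : algC) :
  (Poly (map eval (roots_poly rs))).[t] = \prod_(r <- rs) (t - eval r).
Proof.
elim: rs => [|r rs IHrs].
  by rewrite big_nil horner_Poly /= eval_rat rmorph1 mul0r add0r.
by rewrite /= horner_mulXsub_add IHrs big_cons eval_rat rmorph0 add0r.
Qed.

End PresentationTheory.

Arguments natc {F}.

Definition rat_presentation : presentation :=
  @Presentation rat id +%R -%R *%R GRing.inv ratr (fun _ => erefl)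
    (rmorphD _) (rmorphN _) (rmorphM _).

Section QuadraticExtension.
Variables (F : presentation) (d : code F) (g : algC).
Hypothesis eval_d : eval d = g ^+ 2.

Definition qadd (x y : code F * code F) := (addc x.1 y.1, addc x.2 y.2).
Definition qopp (x : code F * code F) := (oppc x.1, oppc x.2).
Definition qmul (x y : code F * code F) :=
  (addc (mulc x.1 y.1) (mulc d (mulc x.2 y.2)), addc (mulc x.1 y.2) (mulc x.2 y.1)).
Definition qinv (x : code F * code F) :=
  let n := invc (subc (mulc x.1 x.1) (mulc d (mulc x.2 x.2))) in
  (mulc x.1 n, oppc (mulc x.2 n)).
Definition qeval (x : code F * code F) := eval x.1 + eval x.2 * g.

Lemma qeval_rat q : qeval (ratc q, ratc 0) = ratr q.
Proof. by rewrite /qeval !eval_rat rmorph0 mul0r addr0. Qed.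

Lemma qevalD x y : qeval (qadd x y) = qeval x + qeval y.
Proof. rewrite /qeval !evalD; ring. Qed.

Lemma qevalN x : qeval (qopp x) = - qeval x.
Proof. rewrite /qeval !evalN; ring. Qed.

Lemma qevalM x y : qeval (qmul x y) = qeval x * qeval y.
Proof. rewrite /qeval !evalD !evalM eval_d; ring. Qed.

Definition quad_ext : presentation :=
  @Presentation (code F * code F)%type (fun q => (ratc q, ratc 0))
    qadd qopp qmul qinv qeval qeval_rat qevalD qevalN qevalM.

End QuadraticExtension.

Arguments quad_ext {F d g}.

Definition qact (F U : presentation) (act : code F -> code U) (gU : code U)
    (x : code F * code F) : code U :=
  addc (act x.1) (mulc (act x.2) gU).

Lemma eval_qact (f : {rmorphism algC -> algC}) (F U : presentation) (d : code F)
    (g : algC) (eval_d : eval d = g ^+ 2) (act : code F -> code U) (gU : code U) :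
  (forall x, f (eval x) = eval (act x)) -> f g = eval gU ->
  forall x : code (quad_ext eval_d), f (eval x) = eval (qact act gU x).
Proof.
by move=> fact fg [x1 x2]; rewrite /= /qeval rmorphD rmorphM !fact fg evalD evalM.
Qed.

Lemma fmorph_eval_rat (f : {rmorphism algC -> algC}) (U : presentation)
    (q : code rat_presentation) :
  f (eval q) = eval (ratc q : code U).
Proof. by rewrite !eval_rat fmorph_rat. Qed.

Lemma eval_minus1 : eval (ratc (-1) : code rat_presentation) = 'i ^+ 2.
Proof. by rewrite sqrCi /= rmorphN rmorph1. Qed.

Definition Qi := quad_ext eval_minus1.

Lemma eval_two : eval (ratc 2 : code Qi) = sqrt2 ^+ 2.
Proof. by rewrite eval_rat rmorph_nat sqrtCK. Qed.

Definition Qi_sqrt2 := quad_ext eval_two.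

Lemma eval_1i : eval (((1, 1), (0, 0)) : code Qi_sqrt2) = sqrt1i ^+ 2.
Proof. by rewrite sqrtCK /= /qeval /= /qeval /= !(rmorph0, rmorph1); ring. Qed.

Definition K := quad_ext eval_1i.

(* The code (((a, b), (c, d)), ((e, f), (g, h))) of K stands for
   a + b i + (c + d i) sqrt2 + (e + f i + (g + h i) sqrt2) sqrt(1 + i). *)
Lemma eval_K a b c d e f g h :
  eval ((((a, b), (c, d)), ((e, f), (g, h))) : code K) =
  ratr a + ratr b * 'i + (ratr c + ratr d * 'i) * sqrt2 +
  (ratr e + ratr f * 'i + (ratr g + ratr h * 'i) * sqrt2) * sqrt1i.
Proof. by []. Qed.

Definition code_i : code K := (((0, 1), (0, 0)), ((0, 0), (0, 0))).
Definition code_sqrt2 : code K := (((0, 0), (1, 0)), ((0, 0), (0, 0))).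
Definition code_sqrt1i : code K := (((0, 0), (0, 0)), ((1, 0), (0, 0))).

Lemma eval_code_i : eval code_i = 'i.
Proof. by rewrite eval_K !rmorph0 rmorph1; ring. Qed.

Lemma eval_code_sqrt2 : eval code_sqrt2 = sqrt2.
Proof. by rewrite eval_K !rmorph0 rmorph1; ring. Qed.

Lemma eval_code_sqrt1i : eval code_sqrt1i = sqrt1i.
Proof. by rewrite eval_K !rmorph0 rmorph1; ring. Qed.

Definition act_K (gi g2 ga : code K) : code K -> code K :=
  @qact Qi_sqrt2 K (@qact Qi K (@qact rat_presentation K ratc gi) g2) ga.

Lemma eval_act_K (f : {rmorphism algC -> algC}) gi g2 ga :
  f 'i = eval gi -> f sqrt2 = eval g2 -> f sqrt1i = eval ga ->
  forall z, f (eval z) = eval (act_K gi g2 ga z).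
Proof.
move=> fi f2 fa; apply: eval_qact fa; apply: eval_qact f2; apply: eval_qact fi.
exact: fmorph_eval_rat.
Qed.

Section CurveArithmetic.
Variable F : presentation.
Local Notation pt := (option (code F * code F)).
Implicit Types (x y : code F) (p q : pt).

Definition eval_pt p : ec_pt := omap (fun xy => (eval xy.1, eval xy.2)) p.

Definition tangent_slope x y :=
  mulc (addc (addc (mulc (natc 3) (mulc x x)) (mulc (natc 2) x)) (natc 1))
       (invc (mulc (natc 2) y)).

Definition add_pt p q : pt :=
  match p, q with
  | None, _ => q
  | _, None => p
  | Some (x1, y1), Some (x2, y2) =>
      if (x1 == x2) && (y1 == oppc y2) then None
      else
        let l := if x1 == x2 then tangent_slope x1 y1
                 else mulc (subc y2 y1) (invc (subc x2 x1)) in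
        let x3 := subc (subc (subc (mulc l l) (natc 1)) x1) x2 in
        Some (x3, oppc (addc (mulc l (subc x3 x1)) y1))
  end.

(* Every equality test made by [add_pt] must agree with the one [ec_add]
   makes on the evaluated coordinates, and every inverted code must be
   certified invertible. *)
Definition add_pt_certified p q : bool :=
  match p, q with
  | Some (x1, y1), Some (x2, y2) =>
      certified_eq x1 x2 &&
      (if x1 == x2 then
         certified_eq y1 (oppc y2) && ((y1 == oppc y2) || unitc (mulc (natc 2) y1))
       else unitc (subc x2 x1))
  | _, _ => true
  end.

Lemma eval_add_pt p q :
  add_pt_certified p q -> eval_pt (add_pt p q) = ec_add (eval_pt p) (eval_pt q).
Proof.
case: p => [[x1 y1]|]; case: q => [[x2 y2]|] //= /andP[cx].
rewrite (eval_eqE cx); case: (eqVneq x1 x2) => [<- /andP[cy] | _ u] /=.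
  rewrite -evalN (eval_eqE cy); case: eqP => //= _ u.
  by rewrite /tangent_slope !(evalD, evalM, evalN, evalB, eval_natc, eval_invc u) -expr2.
by rewrite !(evalD, evalM, evalN, evalB, eval_natc, eval_invc u).
Qed.

Definition mul_pt n p : pt := iter n (add_pt p) None.

Fixpoint mul_pt_certified n p : bool :=
  if n is n'.+1 then mul_pt_certified n' p && add_pt_certified p (mul_pt n' p)
  else true.

Lemma eval_mul_pt n p : mul_pt_certified n p -> eval_pt (mul_pt n p) = ec_mul n (eval_pt p).
Proof. by elim: n => //= n IHn /andP[/IHn <- /eval_add_pt]. Qed.

Definition curve_rhs x := addc (addc (addc (mulc (mulc x x) x) (mulc x x)) x) (natc 1).

Definition on_curve_code p : bool :=
  if p is Some (x, y) then mulc y y == curve_rhs x else true.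

Lemma eval_on_curve_code p : on_curve_code p -> on_E (eval_pt p).
Proof.
case: p => [[x y]|] //= /eqP /(congr1 eval).
rewrite /curve_rhs !(evalD, evalM, eval_natc) => yy.
by apply/eqP; rewrite expr2 yy; ring.
Qed.

Definition E4_certified p : bool :=
  [&& on_curve_code p, mul_pt_certified 4 p & mul_pt 4 p == None].

Lemma E4_eval_pt p : E4_certified p -> E4 (eval_pt p).
Proof.
case/and3P=> onp c4 /eqP p4.
by rewrite /E4 eval_on_curve_code // -(eval_mul_pt c4) p4.
Qed.

Definition pt_neq_certified p q : bool :=
  match p, q with
  | None, None => false
  | Some (x1, y1), Some (x2, y2) => unitc (subc x1 x2) || unitc (subc y1 y2)
  | _, _ => true
  end.

Lemma eval_pt_neq p q : pt_neq_certified p q -> eval_pt p != eval_pt q.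
Proof.
case: p => [[x1 y1]|]; case: q => [[x2 y2]|] //= /orP[] /eval_unitc_neq0;
  rewrite evalB subr_eq0; apply: contraNneq => -[].
- by move=> ->.
- by move=> _ ->.
Qed.

Definition act_pt (h : code F -> code F) p : pt :=
  omap (fun xy => (h xy.1, h xy.2)) p.

Lemma ec_map_eval_pt (f : algC -> algC) (h : code F -> code F) :
  (forall z, f (eval z) = eval (h z)) ->
  forall p, ec_map f (eval_pt p) = eval_pt (act_pt h p).
Proof. by move=> fh [[x y]|] //=; rewrite !fh. Qed.

End CurveArithmetic.

Definition ecf (x : algC) := x ^+ 3 + x ^+ 2 + x + 1.

(* Half the quotient psi_4 / psi_2 of division polynomials of E; its roots
   are the abscissae of the points of exact order 4. *)
Definition psi4 (x : algC) := (x ^+ 2 + 2 * x - 1) * ((x ^+ 2 + 1) ^+ 2 + (2 * x + 2) ^+ 2).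

Lemma ec_add_eq_None x y p : ec_add (Some (x, y)) p = None -> p = Some (x, - y).
Proof.
case: p => [[x' y']|] //=; case: ifP => // /andP[/eqP <- /eqP ->].
by rewrite opprK.
Qed.

Lemma ec_add_dbl_eq_opp x y m xd yd :
  2 * y != 0 -> m * (2 * y) = 3 * x ^+ 2 + 2 * x + 1 ->
  xd = m ^+ 2 - 1 - x - x -> yd = - (m * (xd - x) + y) ->
  ec_add (Some (x, y)) (Some (xd, yd)) = Some (x, - y) -> yd = 0.
Proof.
move=> y2 hm hxd hyd; case: (eqVneq x xd) => [exd | nx].
  have -> : yd = - y by rewrite hyd -exd subrr mulr0 add0r.
  by rewrite /= -exd opprK !eqxx.
rewrite /= (negbTE nx) /=; set l := (yd - y) / (xd - x); case=> e1 _.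
have hl : l * (xd - x) = yd - y by rewrite divfK // subr_eq0 eq_sym.
have lm : (l - m) * (l + m) = 0.
  have -> : (l - m) * (l + m) = (l ^+ 2 - 1 - x - xd - x) - (m ^+ 2 - 1 - x - x - xd) by ring.
  by rewrite e1 -hxd !subrr.
have lpm : (l + m) * (xd - x) = - (2 * y) by rewrite mulrDl hl hyd; ring.
have lm0 : l + m != 0.
  by apply: contraNneq y2 => lm0; rewrite -oppr_eq0 -lpm lm0 mul0r.
have lEm : l = m.
  by apply/eqP; move/eqP: lm; rewrite mulf_eq0 (negbTE lm0) orbF subr_eq0.
have : 2 * yd = 0 by rewrite mulr_natl mulr2n {1}hyd -lEm hl; ring.
by move/eqP; rewrite mulf_eq0 pnatr_eq0 => /eqP.
Qed.

Lemma E4_ecf_psi4 x y : E4 (Some (x, y)) -> ecf x * psi4 x = 0.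
Proof.
case/andP=> /eqP onE /eqP h4.
have {h4} h3 : ec_add (Some (x, y)) (ec_add (Some (x, y)) (Some (x, y))) = Some (x, - y).
  exact: ec_add_eq_None h4.
have [y2 | y2] := eqVneq (2 * y) 0.
  move/eqP: y2; rewrite mulf_eq0 pnatr_eq0 => /eqP y0.
  by rewrite /ecf -onE y0 expr0n mul0r.
set m := (3 * x ^+ 2 + 2 * x + 1) / (2 * y).
have hm : m * (2 * y) = 3 * x ^+ 2 + 2 * x + 1 by rewrite divfK.
have yNy : (y == - y) = false.
  by apply/negbTE; apply: contraNneq y2 => e; rewrite mulr_natl mulr2n {1}e addNr.
move: h3; rewrite [ec_add (Some (x, y)) (Some (x, y))]/= eqxx yNy /= -/m.
move/(ec_add_dbl_eq_opp y2 hm erefl erefl) => yd0.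
have -> : psi4 x = (2 * y) ^+ 3 * (- (m * (m ^+ 2 - 1 - x - x - x) + y)).
  transitivity (- ((m * (2 * y)) ^+ 3 - 4 * (1 + 3 * x) * (m * (2 * y)) * y ^+ 2
                   + 8 * (y ^+ 2) ^+ 2)); last by ring.
  by rewrite hm onE /psi4; ring.
by rewrite yd0 !mulr0.
Qed.

Local Notation ptK := (option (code K * code K)).

Definition P0 : ptK :=
  Some ((((0, -1), (0, 0)), ((0, 0), (0, 1))), (((0, -2), (0, 0)), ((0, 0), (1, 1)))).
Definition Q0 : ptK :=
  Some ((((-1, 0), (1, 0)), ((0, 0), (0, 0))), (((0, 0), (0, 0)), ((-1, -1), (0, 1)))).

Definition combo (a c : nat) : ptK := add_pt (mul_pt a P0) (mul_pt c Q0).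

Definition combo_certified (a c : nat) : bool :=
  [&& mul_pt_certified a P0, mul_pt_certified c Q0 &
      add_pt_certified (mul_pt a P0) (mul_pt c Q0)].

Definition Z4pairs : seq (nat * nat) := [seq (a, c) | a <- iota 0 4, c <- iota 0 4].

Lemma mem_Z4pairs (ac : 'I_4 * 'I_4) : (val ac.1, val ac.2) \in Z4pairs.
Proof. by apply/allpairsP; exists (val ac.1, val ac.2); rewrite !mem_iota !ltn_ord. Qed.

Lemma Z4pairsP ac : ac \in Z4pairs -> exists ac' : 'I_4 * 'I_4, ac = (val ac'.1, val ac'.2).
Proof.
by case/allpairsP=> -[a c] []; rewrite !mem_iota => ha hc ->; exists (Ordinal ha, Ordinal hc).
Qed.

Lemma combos_certified : all (fun ac => combo_certified ac.1 ac.2) Z4pairs.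
Proof. by vm_compute. Qed.

Lemma eval_combo (a c : 'I_4) :
  eval_pt (combo a c) = ec_add (ec_mul a (eval_pt P0)) (ec_mul c (eval_pt Q0)).
Proof.
have /and3P[cP cQ cPQ] := allP combos_certified _ (mem_Z4pairs (a, c)).
by rewrite eval_add_pt // !eval_mul_pt.
Qed.

Lemma combos_distinct :
  all (fun ac => all (fun ac' =>
    (ac == ac') || pt_neq_certified (combo ac.1 ac.2) (combo ac'.1 ac'.2)) Z4pairs) Z4pairs.
Proof. by vm_compute. Qed.

Lemma eval_combo_inj (ac ac' : 'I_4 * 'I_4) :
  eval_pt (combo ac.1 ac.2) = eval_pt (combo ac'.1 ac'.2) -> ac = ac'.
Proof.
move=> e; have := allP (allP combos_distinct _ (mem_Z4pairs ac)) _ (mem_Z4pairs ac').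
case/orP=> [/eqP [e1 e2] | /eval_pt_neq]; last by rewrite e eqxx.
by case: ac ac' e1 e2 {e} => [a c] [a' c'] /= /val_inj -> /val_inj ->.
Qed.

Definition E4_table : seq (code K * code K) := [::
  ((((-1, 0), (0, 0)), ((0, 0), (0, 0))), (((0, 0), (0, 0)), ((0, 0), (0, 0))));
  ((((0, 1), (0, 0)), ((0, 0), (0, 0))), (((0, 0), (0, 0)), ((0, 0), (0, 0))));
  ((((0, -1), (0, 0)), ((0, 0), (0, 0))), (((0, 0), (0, 0)), ((0, 0), (0, 0))));
  ((((-1, 0), (1, 0)), ((0, 0), (0, 0))), (((0, 0), (0, 0)), ((1, 1), (0, -1))));
  ((((-1, 0), (-1, 0)), ((0, 0), (0, 0))), (((0, 0), (0, 0)), ((1, 1), (0, 1))));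
  ((((0, 1), (0, 0)), ((1, 1), (0, 0))), (((0, -2), (0, 0)), ((0, -2), (0, 0))));
  ((((0, 1), (0, 0)), ((-1, -1), (0, 0))), (((0, 2), (0, 0)), ((0, -2), (0, 0))));
  ((((0, -1), (0, 0)), ((0, 0), (0, 1))), (((0, -2), (0, 0)), ((0, 0), (1, 1))));
  ((((0, -1), (0, 0)), ((0, 0), (0, -1))), (((0, 2), (0, 0)), ((0, 0), (1, 1))))].

Definition E4_candidates : seq ptK :=
  None :: [seq Some xy | xy <- E4_table] ++ [seq Some (xy.1, oppc xy.2) | xy <- E4_table].

Lemma E4_table_on_curve : all (fun xy => on_curve_code (Some xy)) E4_table.
Proof. by vm_compute. Qed.

Lemma E4_table_roots :
  roots_poly (map fst E4_table) == map ratc [:: -5; -3; 12; 32; 42; 42; 28; 8; 3; 1].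
Proof. by vm_compute. Qed.

Lemma ecf_psi4_split x : ecf x * psi4 x = \prod_(X <- map fst E4_table) (x - eval X).
Proof.
rewrite -horner_roots_poly (eqP E4_table_roots) -map_comp (eq_map (@eval_rat K)).
rewrite horner_Poly /= !(rmorphN, rmorph_nat) /ecf /psi4; ring.
Qed.

Lemma E4_in_candidates T : E4 T -> exists2 t, t \in E4_candidates & T = eval_pt t.
Proof.
case: T => [[x y] hT|]; last by exists None.
have /eqP := E4_ecf_psi4 hT; rewrite ecf_psi4_split prodf_seq_eq0.
case/hasP=> _ /mapP[[X Y] hXY ->] /=; rewrite subr_eq0 => /eqP xX.
have onXY : eval Y ^+ 2 = ecf (eval X).
  exact: eqP (eval_on_curve_code (allP E4_table_on_curve _ hXY)).
have onxy : y ^+ 2 = ecf x := eqP (proj1 (andP hT)).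
have /eqP := onxy; rewrite xX -onXY eqf_sqr => /orP[] /eqP ->.
  by exists (Some (X, Y)); rewrite // in_cons mem_cat (map_f _ hXY) orbT.
exists (Some (X, oppc Y)); last by rewrite -evalN.
by rewrite in_cons mem_cat (map_f (fun xy => Some (xy.1, oppc xy.2)) hXY) !orbT.
Qed.

Lemma E4_candidates_combos :
  all (fun t => has (fun ac => combo ac.1 ac.2 == t) Z4pairs) E4_candidates.
Proof. by vm_compute. Qed.

Lemma E4_basis_P0_Q0 : E4_basis (eval_pt P0) (eval_pt Q0).
Proof.
have E4P0 : E4_certified P0 by vm_compute.
have E4Q0 : E4_certified Q0 by vm_compute.
split; [exact: E4_eval_pt | split; [exact: E4_eval_pt | move=> T]].
case/E4_in_candidates=> t /(allP E4_candidates_combos) /hasP[_ /Z4pairsP[ac ->] /eqP <-] ->.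
exists ac; split; first exact: eval_combo.
by move=> ac' /esym; rewrite -eval_combo => /eval_combo_inj.
Qed.

Definition code_r_sqrt1i : code K := (((0, 0), (0, 0)), ((0, 0), (2^-1, - 2^-1))).

Lemma eval_code_r_sqrt1i : eval code_r_sqrt1i = (1 - 'i) / sqrt2 * sqrt1i.
Proof.
have s2 : sqrt2 ^+ 2 = 2 := sqrtCK 2.
have s0 : sqrt2 != 0 by rewrite sqrtC_eq0 pnatr_eq0.
by rewrite eval_K !(rmorph0, rmorphN, fmorphV, rmorph_nat) -s2; field.
Qed.

Definition gal_r : code K -> code K := act_K (oppc code_i) (oppc code_sqrt2) code_r_sqrt1i.
Definition gal_s : code K -> code K := act_K code_i (oppc code_sqrt2) code_sqrt1i.

Lemma eval_gal_r (r : {rmorphism algC -> algC}) :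
  is_r r -> forall z, r (eval z) = eval (gal_r z).
Proof.
case=> ri [r2 ra]; apply: eval_act_K.
- by rewrite ri evalN eval_code_i.
- by rewrite r2 evalN eval_code_sqrt2.
- by rewrite ra eval_code_r_sqrt1i.
Qed.

Lemma eval_gal_s (s : {rmorphism algC -> algC}) :
  is_s s -> forall z, s (eval z) = eval (gal_s z).
Proof.
case=> si [s2 sa]; apply: eval_act_K.
- by rewrite si eval_code_i.
- by rewrite s2 evalN eval_code_sqrt2.
- by rewrite sa eval_code_sqrt1i.
Qed.

Definition gal_img (a b : nat) (z : code K) : code K := iter a gal_r (iter b gal_s z).

Definition K_gens : seq (code K) := [:: code_i; code_sqrt2; code_sqrt1i].

Lemma gal_s_order2 : all (fun z => iter 2 gal_s z == z) K_gens.
Proof. by vm_compute. Qed.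

Lemma gal_r_order4 : all (fun z => iter 4 gal_r z == z) (K_gens ++ map gal_s K_gens).
Proof. by vm_compute. Qed.

Lemma gal_img_mod a b z : z \in K_gens -> gal_img a b z = gal_img (a %% 4) (b %% 2) z.
Proof.
move=> zK; rewrite /gal_img (iter_modn b (eqP (allP gal_s_order2 z zK))).
apply: iter_modn; apply/eqP/(allP gal_r_order4); rewrite mem_cat.
by case: (b %% 2)%N (ltn_pmod b (isT : 0 < 2)%N) => [|[|//]] _; rewrite ?zK ?map_f ?orbT.
Qed.

Definition gal (a b : nat) : code K -> code K :=
  act_K (gal_img a b code_i) (gal_img a b code_sqrt2) (gal_img a b code_sqrt1i).

Lemma eval_gal (r s sigma : {rmorphism algC -> algC}) (a b : nat) :
  is_r r -> is_s s -> agree_on_K sigma (fun x => iter a r (iter b s x)) ->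
  forall z, sigma (eval z) = eval (gal (a %% 4) (b %% 2) z).
Proof.
move=> hr hs [si [s2 sa]].
have img z : z \in K_gens -> iter a r (iter b s (eval z)) = eval (gal_img (a %% 4) (b %% 2) z).
  by move=> zK; rewrite -gal_img_mod // (eval_iter (eval_gal_s hs)) (eval_iter (eval_gal_r hr)).
apply: eval_act_K.
- by rewrite si -{1}eval_code_i img.
- by rewrite s2 -{1}eval_code_sqrt2 img ?inE ?eqxx ?orbT.
- by rewrite sa -{1}eval_code_sqrt1i img ?inE ?eqxx ?orbT.
Qed.

Lemma Mr_order4 : Mr ^+ 4 = 1.
Proof.
apply/matrixP => i j; rewrite !exprS expr0 mulr1 !mul_mx2E !mxE.
by case: i => [[|[|//]] ?]; case: j => [[|[|//]] ?]; apply/eqP; vm_compute.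
Qed.

Lemma Ms_order2 : Ms ^+ 2 = 1.
Proof.
apply/matrixP => i j; rewrite !exprS expr0 mulr1 !mul_mx2E !mxE.
by case: i => [[|[|//]] ?]; case: j => [[|[|//]] ?]; apply/eqP; vm_compute.
Qed.

Definition acts_by_code (h : code K -> code K) (M : 'M['Z_4]_2) : bool :=
  (act_pt h P0 == combo (M 0 0) (M 1 0)) && (act_pt h Q0 == combo (M 0 1) (M 1 1)).

Lemma acts_by_eval (f : algC -> algC) h M :
  (forall z, f (eval z) = eval (h z)) -> acts_by_code h M ->
  acts_by f (eval_pt P0) (eval_pt Q0) M.
Proof.
move=> fh /andP[/eqP hP /eqP hQ].
by rewrite /acts_by !(ec_map_eval_pt fh) hP hQ !eval_combo.
Qed.

Lemma gal_acts a b : (a < 4)%N -> (b < 2)%N -> acts_by_code (gal a b) (Mr ^+ a * Ms ^+ b).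
Proof.
case: a => [|[|[|[|//]]]] _; case: b => [|[|//]] _;
  by rewrite /acts_by_code ?exprS ?expr0 ?mulr1 ?mul_mx2E !mxE; vm_compute.
Qed.

Lemma galois_action (r s sigma : {rmorphism algC -> algC}) (a b : nat) :
  is_r r -> is_s s -> agree_on_K sigma (fun x => iter a r (iter b s x)) ->
  acts_by sigma (eval_pt P0) (eval_pt Q0) (Mr ^+ a * Ms ^+ b).
Proof.
move=> hr hs hsigma.
rewrite -(expr_mod a Mr_order4) -(expr_mod b Ms_order2).
by apply: acts_by_eval (eval_gal hr hs hsigma) (gal_acts _ _); rewrite ltn_pmod.
Qed.

Theorem proposition3p9 :
  exists P Q : ec_pt, E4_basis P Q /\
    forall (r s sigma : {rmorphism algC -> algC}) (a b : nat),
      is_r r -> is_s s ->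
      agree_on_K sigma (fun x => iter a r (iter b s x)) ->
      acts_by sigma P Q (Mr ^+ a * Ms ^+ b).
Proof.
exists (eval_pt P0), (eval_pt Q0); split; first exact: E4_basis_P0_Q0.
exact: galois_action.
Qed.
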